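(* Let $p$ be a prime and $n\ge1$, and suppose $p^n-1=st$ with positive integers $s<t$ and $\gcd(s,t)=1$. Let $\alpha$ be a generator of $\mathbb{F}_{p^n}^\times$, $\beta=\alpha^t$, $\gamma=\alpha^s$. Let $S_0\subset\mathbb{Z}_s\times\mathbb{Z}_t$ be a linearly independent pattern of size $m$ with $m\mid n$, and let $r=n/m$. Then there exist shifts $(a_1,b_1),\dots,(a_r,b_r)\in\mathbb{Z}_s\times\mathbb{Z}_t$ such that the translates $T_{a_1,b_1}(S_0),\dots,T_{a_r,b_r}(S_0)$ are pairwise disjoint and their union $S=\bigcup_{k=1}^r T_{a_k,b_k}(S_0)$ is a basis pattern, and hence, for any nonzero $\mathbb{F}_p$-linear map $\psi:\mathbb{F}_{p^n}\to\mathbb{F}_p$, a sampling pattern for the array $B_{i,j}=\psi(\beta^i\gamma^j)$.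
   Context: $\mathbb{Z}_s=\mathbb{Z}/s\mathbb{Z}$, $\mathbb{Z}_t=\mathbb{Z}/t\mathbb{Z}$; $(i,j)\mapsto\beta^i\gamma^j$ is a well-defined bijection $\mathbb{Z}_s\times\mathbb{Z}_t\to\mathbb{F}_{p^n}^\times$. For a pattern $S\subset\mathbb{Z}_s\times\mathbb{Z}_t$, $A|_S=\{\beta^i\gamma^j:(i,j)\in S\}$. $S$ is linearly independent if the elements of $A|_S$ are $\mathbb{F}_p$-linearly independent, and a basis pattern if $A|_S$ is an $\mathbb{F}_p$-basis of $\mathbb{F}_{p^n}$. $T_{a,b}(i,j)=(i+a\bmod s,\ j+b\bmod t)$. For $(a,b)\in\mathbb{Z}_s\times\mathbb{Z}_t$, the value pattern of $S$ is $v_{a,b}=(B_{i+a,j+b})_{(i,j)\in S}\in\mathbb{F}_p^S$; $S$ is a sampling pattern if the $p^n-1$ vectors $v_{a,b}$ are pairwise distinct and are exactly the nonzero vectors of $\mathbb{F}_p^S$. *)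

From HB Require Import structures.
From mathcomp Require Import all_boot all_order all_algebra all_fingroup all_field.
Set Implicit Arguments. Unset Strict Implicit. Unset Printing Implicit Defensive.
Import GRing.Theory.
Local Open Scope ring_scope.

(* Indices (i,j) in Z_s x Z_t are represented by 'I_s * 'I_t (s,t >= 1). *)
Lemma ord_mod_lt (s : nat) (i : 'I_s) (a : nat) : ((i + a) %% s < s)%N.
Proof. by apply: ltn_pmod; apply: leq_ltn_trans (ltn_ord i). Qed.

Definition addmod (s : nat) (i : 'I_s) (a : nat) : 'I_s :=
  Ordinal (ord_mod_lt i a).

Definition Tsh (s t : nat) (ab : 'I_s * 'I_t) (ij : 'I_s * 'I_t) : 'I_s * 'I_t :=
  (addmod ij.1 ab.1, addmod ij.2 ab.2).

Definition translate (s t : nat) (ab : 'I_s * 'I_t) (S : {set 'I_s * 'I_t}) :=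
  [set Tsh ab x | x in S].

Section Patterns.
Variables (p : nat) (F : finFieldType) (chF : p \in [pchar F]).
Local Notation FF := (pPrimeCharType chF).
Variables (s t : nat) (beta gamma : F).

Definition Aelt (x : 'I_s * 'I_t) : FF := beta ^+ x.1 * gamma ^+ x.2.

(* A|_S as a sequence (S is a set, so no repeated indices) *)
Definition Arestr (S : {set 'I_s * 'I_t}) : seq FF := [seq Aelt x | x <- enum S].

Definition lin_indep_pattern (S : {set 'I_s * 'I_t}) : bool := free (Arestr S).

Definition basis_pattern (S : {set 'I_s * 'I_t}) : bool :=
  basis_of fullv (Arestr S).

Definition Barr (psi : FF -> 'F_p) (x : 'I_s * 'I_t) : 'F_p := psi (Aelt x).

(* value pattern v_{a,b} in F_p^S, encoded as a finite function vanishing off S *)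
Definition value_pattern (psi : FF -> 'F_p) (S : {set 'I_s * 'I_t})
    (ab : 'I_s * 'I_t) : {ffun 'I_s * 'I_t -> 'F_p} :=
  [ffun x => if x \in S then Barr psi (Tsh ab x) else 0].

Definition sampling_pattern (psi : FF -> 'F_p) (S : {set 'I_s * 'I_t}) : Prop :=
  injective (value_pattern psi S) /\
  forall w : {ffun 'I_s * 'I_t -> 'F_p},
    (w != 0 /\ forall x, x \notin S -> w x = 0) <->
    exists ab, value_pattern psi S ab = w.

End Patterns.

From HB Require Import structures.
From mathcomp Require Import all_boot all_order all_algebra all_fingroup all_field.
From mathcomp Require Import zify.
Set Implicit Arguments.
Unset Strict Implicit.
Unset Printing Implicit Defensive.
Import GRing.Theory.
Local Open Scope ring_scope.

(* The map (i, j) |-> beta^i gamma^j is a bijection onto the nonzero elements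
   of F (Chinese remainder theorem, as s and t are coprime), and it turns the
   shift T_(a,b) into multiplication by x = beta^a gamma^b, so that
   A|T_(a,b)(S0) spans the coset V x of V = span A|S0.  Counting quotients w / v
   shows that some coset V x meets any given subspace W of dimension at most
   n - dim V trivially; hence x_1, ..., x_r can be chosen greedily with
   V x_1 + ... + V x_r direct, i.e. equal to F.  The r translates then have
   n = r m elements in total and span F: they are pairwise disjoint and their
   union is a basis.  For a basis pattern S and psi <> 0 the map
   z |-> (psi (z beta^i gamma^j))_(i,j) in S is injective, hence a bijection
   from F onto F_p^S, and v_(a,b) is its value at beta^a gamma^b. *)

Lemma leq_card_bigcup (I T : finType) (P : pred I) (A : I -> {set T}) :
  (#|\bigcup_(i | P i) A i| <= \sum_(i | P i) #|A i|)%N.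
Proof.
elim/big_rec2: _ => [|i n U _ leUn]; first by rewrite cards0.
by rewrite (leq_trans (leq_card_setU _ _).1) ?leq_add2l.
Qed.

Lemma card_bigcup_disjoint (I T : finType) (A : I -> {set T}) :
  #|\bigcup_i A i| = (\sum_i #|A i|)%N ->
  forall i j, i != j -> [disjoint A i & A j].
Proof.
move=> eqU i j neq_ij; set U' := \bigcup_(k | k != i) A k.
have UE : \bigcup_k A k = A i :|: U' by rewrite (bigD1 i).
have [le_AU' eq_AU'] := leq_card_setU (A i) U'.
have disjU' : [disjoint A i & U'].
  by rewrite -eq_AU' eqn_leq le_AU' -UE eqU (bigD1 i) //= leq_add2l leq_card_bigcup.
by apply: disjointWr disjU'; apply: (bigcup_sup j); rewrite eq_sym.
Qed.

Lemma eqn_modMl_coprime s t a b :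
  coprime s t -> (t * a == t * b %[mod s])%N = (a == b %[mod s])%N.
Proof.
move=> cst; wlog le_ba : a b / (b <= a)%N.
  move=> W; case: (leqP b a) => [|/ltnW] /W // e.
  by rewrite eq_sym e eq_sym.
by rewrite !eqn_mod_dvd ?leq_mul2l ?le_ba ?orbT // -mulnBr Gauss_dvdr.
Qed.

Lemma addmod_inj s a : injective (fun i : 'I_s => addmod i a).
Proof.
move=> i j /(congr1 val) /eqP; rewrite /= eqn_modDr !modn_small //.
by move/eqP/val_inj.
Qed.

Lemma Tsh_inj s t (ab : 'I_s * 'I_t) : injective (Tsh ab).
Proof.
move=> [i j] [i' j'] e; congr pair.
  exact: addmod_inj (congr1 fst e).
exact: addmod_inj (congr1 snd e).
Qed.

Lemma card_translate s t (ab : 'I_s * 'I_t) S : #|translate ab S| = #|S|.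
Proof. exact/card_imset/Tsh_inj. Qed.

Lemma linear_mul_basis_eq0 (K : fieldType) (L : fieldExtType K)
    (psi : {linear L -> K^o}) (X : seq L) (z : L) :
  basis_of fullv X -> (exists y, psi y != 0) ->
  {in X, forall x, psi (z * x) = 0} -> z = 0.
Proof.
move=> basisX [y psi_y] psi_zX; apply: contraNeq psi_y => nz_z.
have psi_zL u : psi (z * u) = 0.
  have Xu : u \in <<in_tuple X>>%VS by rewrite (span_basis basisX) memvf.
  rewrite (coord_span Xu) mulr_sumr linear_sum big1 // => i _.
  by rewrite -scalerAr linearZ psi_zX; [exact: mulr0 | exact: mem_nth].
by rewrite -(mulVKf nz_z y) psi_zL.
Qed.

Section PrimeCharVectorSpace.
Variables (p : nat) (F : finFieldType) (chF : p \in [pchar F]).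
Let p_pr : prime p := pcharf_prime chF.
Local Notation FF := (pPrimeCharType chF).

Lemma card_vspace_nz (W : {vspace FF}) :
  #|[set w in W] :\ 0| = (p ^ \dim W - 1)%N.
Proof.
have := cardsD1 0 [set w in W]; rewrite inE mem0v cardsE card_vspace card_Fp //.
by move=> ->; rewrite add1n subn1.
Qed.

(* Otherwise every x != 0 is a quotient w / v of nonzero w in W and v in V,
   but there are at most (p^dim W - 1)(p^dim V - 1) < p^dim F - 1 of those. *)
Lemma exists_coset_capv0 (V W : {vspace FF}) :
  (0 < \dim V)%N -> (\dim W + \dim V <= \dim {:FF})%N ->
  exists2 x : FF, x != 0 & (W :&: V * <[x]> = 0)%VS.
Proof.
move=> dimV_gt0 dimWV.
case: (pickP [pred x : FF | (x != 0) && ((W :&: V * <[x]>)%VS == 0%VS)]).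
  by move=> x /andP[nz_x /eqP capWVx]; exists x.
move=> no_x.
pose Q := [set z.1 / z.2 | z in setX ([set w in W] :\ 0) ([set v in V] :\ 0)].
have sub_nzQ : [set~ 0] \subset Q.
  apply/subsetP => x; rewrite !inE => nz_x.
  have := no_x x; rewrite /= nz_x /= => /negbT; rewrite -vpick0 => nz_w.
  have /[!memv_cap] /andP[Ww /memv_cosetP[v Vv def_w]] :=
    memv_pick (W :&: V * <[x]>)%VS.
  set w := vpick _ in nz_w Ww def_w *.
  have nz_v : v != 0 by apply: contraNneq nz_w => v0; rewrite def_w v0 mul0r.
  apply/imsetP; exists (w, v); first by rewrite !inE nz_w Ww nz_v Vv.
  by rewrite /= def_w mulrC mulKf.
have := leq_trans (subset_leq_card sub_nzQ) (leq_imset_card _ _).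
rewrite cardsC1 card_pprimeChar -pprimeChar_dimf cardsX !card_vspace_nz.
have p_gt1 := prime_gt1 p_pr.
have : (p ^ \dim W * p ^ \dim V <= p ^ \dim {:FF})%N.
  by rewrite -expnD leq_pexp2l // ltnW.
have : (p <= p ^ \dim V)%N by rewrite -{1}(expn1 p) leq_pexp2l // ltnW.
have : (0 < p ^ \dim W)%N by rewrite expn_gt0 ltnW.
move: (p ^ \dim W)%N (p ^ \dim V)%N (p ^ \dim {:FF})%N => a b P; nia.
Qed.

Lemma exists_independent_cosets (V : {vspace FF}) (r : nat) :
  (0 < \dim V)%N -> (r * \dim V <= \dim {:FF})%N ->
  exists2 xs : r.-tuple FF, all (fun x => x != 0) xs &
    \dim (\sum_(x <- xs) V * <[x]>)%VS = (r * \dim V)%N.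
Proof.
move=> dimV_gt0; elim: r => [|r IHr] le_rV_F.
  by exists [tuple]; rewrite // big_nil dimv0.
have [|xs nz_xs dim_sum] := IHr.
  by apply: leq_trans le_rV_F; rewrite leq_pmul2r ?leqnSn.
have [|x nz_x cap0] := @exists_coset_capv0 V (\sum_(x <- xs) V * <[x]>)%VS dimV_gt0.
  by rewrite dim_sum -mulSnr.
exists [tuple of x :: xs]; first by rewrite /= nz_x.
rewrite big_cons dimv_disjoint_sum; last by rewrite capvC.
by rewrite dim_cosetv // dim_sum mulSn.
Qed.

End PrimeCharVectorSpace.

Section Patterns.
Variables (p : nat) (F : finFieldType) (chF : p \in [pchar F]).
Variables (s t : nat) (beta gamma : F).
Local Notation FF := (pPrimeCharType chF).
Local Notation A := (@Aelt p F chF s t beta gamma).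
Local Notation A_ := (@Arestr p F chF s t beta gamma).

Lemma size_Arestr (S : {set 'I_s * 'I_t}) : size (A_ S) = #|S|.
Proof. by rewrite size_map -cardE. Qed.

Lemma dim_span_lin_indep (S : {set 'I_s * 'I_t}) :
  lin_indep_pattern chF beta gamma S -> \dim <<A_ S>> = #|S|.
Proof. by move=> /eqP ->; apply: size_Arestr. Qed.

Lemma card_basis_pattern (S : {set 'I_s * 'I_t}) :
  basis_pattern chF beta gamma S -> #|S| = \dim {:FF}.
Proof. by move=> bS; rewrite -size_Arestr -(eqP (basis_free bS)) (span_basis bS). Qed.

Lemma span_Arestr_subset (S1 S2 : {set 'I_s * 'I_t}) :
  S1 \subset S2 -> (<<A_ S1>> <= <<A_ S2>>)%VS.
Proof.
move=> sub12; apply/span_subvP => y /mapP[x]; rewrite mem_enum => xS1 ->.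
by apply/memv_span/map_f; rewrite mem_enum (subsetP sub12).
Qed.

Lemma basis_pattern_bigcup (I : finType) (T : I -> {set 'I_s * 'I_t}) :
  (\sum_i #|T i| <= \dim {:FF})%N -> (fullv <= \sum_i <<A_ (T i)>>)%VS ->
  basis_pattern chF beta gamma (\bigcup_i T i) /\
  #|\bigcup_i T i| = (\sum_i #|T i|)%N.
Proof.
move=> le_sum_dim span_T; set S := \bigcup_i T i.
have span_S : (fullv <= <<A_ S>>)%VS.
  apply: subv_trans span_T _; apply/subv_sumP => i _.
  exact/span_Arestr_subset/bigcup_sup.
have le_S_sum : (#|S| <= \sum_i #|T i|)%N by apply: leq_card_bigcup.
have bS : basis_pattern chF beta gamma S.
  by rewrite /basis_pattern basisEdim span_S size_Arestr (leq_trans le_S_sum).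
by split=> //; apply/eqP; rewrite eqn_leq le_S_sum card_basis_pattern.
Qed.

Hypotheses (beta_s : beta ^+ s = 1) (gamma_t : gamma ^+ t = 1).

Lemma Aelt_Tsh (ab x : 'I_s * 'I_t) : A (Tsh ab x) = A x * A ab.
Proof. by rewrite /Aelt /Tsh /addmod /= !expr_mod // !exprD mulrACA. Qed.

Lemma Aelt_neq0 (x : 'I_s * 'I_t) : A x != 0.
Proof.
have s_gt0 : (0 < s)%N := leq_ltn_trans (leq0n _) (ltn_ord x.1).
have t_gt0 : (0 < t)%N := leq_ltn_trans (leq0n _) (ltn_ord x.2).
have root1_neq0 k (z : F) : (0 < k)%N -> z ^+ k = 1 -> z != 0.
  move=> k_gt0; apply: contra_eq_neq => ->.
  by rewrite expr0n eqn0Ngt k_gt0 eq_sym oner_neq0.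
rewrite mulf_neq0 // expf_neq0 //.
  exact: (root1_neq0 s).
exact: (root1_neq0 t).
Qed.

Lemma span_translate ab (S : {set 'I_s * 'I_t}) :
  <<A_ (translate ab S)>>%VS = (<<A_ S>> * <[A ab]>)%VS.
Proof.
rewrite -limg_amulr limg_span; apply: eq_span => y; apply/mapP/mapP.
  move=> [_ /[!mem_enum] /imsetP[x xS ->] ->].
  by exists (A x); [apply: map_f; rewrite mem_enum | rewrite lfunE /= Aelt_Tsh].
move=> [_ /mapP[x /[!mem_enum] xS ->] ->].
by exists (Tsh ab x); [rewrite mem_enum imset_f | rewrite lfunE /= Aelt_Tsh].
Qed.

End Patterns.

Section PrimitiveRoot.
Variables (p n : nat) (F : finFieldType) (chF : p \in [pchar F]).
Variables (s t : nat) (alpha : F).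
Hypotheses (hcard : #|F| = (p ^ n)%N) (hst : (p ^ n - 1)%N = (s * t)%N).
Hypotheses (hcop : coprime s t) (halpha : (p ^ n - 1)%N.-primitive_root alpha).
Local Notation FF := (pPrimeCharType chF).
Local Notation A := (@Aelt p F chF s t (alpha ^+ t) (alpha ^+ s)).

Lemma prim_exprt_s : (alpha ^+ t) ^+ s = 1.
Proof. by rewrite -exprM mulnC -hst prim_expr_order. Qed.

Lemma prim_exprs_t : (alpha ^+ s) ^+ t = 1.
Proof. by rewrite -exprM -hst prim_expr_order. Qed.

(* Chinese remainder theorem: t a + s b determines a mod s and b mod t. *)
Lemma Aelt_inj : injective A.
Proof.
move=> [a b] [a' b']; rewrite /Aelt /= -!exprM -!exprD => /eqP.
rewrite (eq_prim_root_expr halpha) hst chinese_remainder // => /andP[eq_s eq_t].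
move: eq_s; rewrite !(addnC (t * _)) ![(s * _)%N]mulnC !modnMDl eqn_modMl_coprime //.
move: eq_t; rewrite ![(t * _)%N]mulnC !modnMDl eqn_modMl_coprime 1?coprime_sym //.
by rewrite !modn_small ?ltn_ord // => /eqP/val_inj-> /eqP/val_inj->.
Qed.

Let A_neq0 ab : A ab != 0 :> FF := Aelt_neq0 chF prim_exprt_s prim_exprs_t ab.

Lemma Aelt_onto (y : FF) : y != 0 -> exists ab, A ab = y.
Proof.
have sub_nz : [set A ab | ab in setT] \subset [set~ 0].
  apply/subsetP => _ /imsetP[ab _ ->]; rewrite !inE.
  exact: A_neq0.
have [_] := subset_leqif_card sub_nz.
have cardFF : #|FF| = (p ^ n)%N := hcard.
rewrite cardsC1 card_imset; last exact: Aelt_inj.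
rewrite cardsT card_prod !card_ord cardFF -hst subn1 eqxx => /esym/subsetP sub_im nz_y.
have /imsetP[ab _ ->] : y \in [set A ab | ab in setT] by apply: sub_im; rewrite !inE.
by exists ab.
Qed.

Lemma dim_pPrimeChar : \dim {:FF} = n.
Proof. by rewrite pprimeChar_dimf [#|_|]hcard pfactorK // (pcharf_prime chF). Qed.

Lemma exists_translates_span_full (S0 : {set 'I_s * 'I_t}) (r : nat) :
    lin_indep_pattern chF (alpha ^+ t) (alpha ^+ s) S0 ->
    (0 < #|S0|)%N -> (r * #|S0|)%N = n ->
  exists sh : 'I_r -> 'I_s * 'I_t,
    (\sum_(k < r) <<Arestr chF (alpha ^+ t)%R (alpha ^+ s)%R (translate (sh k) S0)>>)%VS
      = fullv.
Proof.
move=> indepS0 S0_gt0 rS0_n; set V := span (Arestr chF (alpha ^+ t) (alpha ^+ s) S0).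
have dimV : \dim V = #|S0| := dim_span_lin_indep indepS0.
have [||xs nz_xs dim_sum] := @exists_independent_cosets _ _ chF V r.
- by rewrite dimV.
- by rewrite dimV rS0_n dim_pPrimeChar.
have preimage_xs (k : 'I_r) : exists ab, A ab = tnth xs k.
  by apply: Aelt_onto; apply: (allP nz_xs); apply: mem_tnth.
have [sh def_sh] := fin_all_exists preimage_xs; exists sh.
under eq_bigr do rewrite (span_translate chF prim_exprt_s prim_exprs_t) def_sh.
rewrite big_tuple in dim_sum.
by apply/eqP; rewrite eqEdim subvf /= -/V dim_sum dimV rS0_n dim_pPrimeChar.
Qed.

Section Sampling.
Variables (S : {set 'I_s * 'I_t}) (psi : FF -> 'F_p).
Hypotheses (basisS : basis_pattern chF (alpha ^+ t) (alpha ^+ s) S).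
Hypotheses (psi_lin : linear (psi : FF -> ('F_p)^o)) (psi_nz : exists y, psi y != 0).

Let psiL : {linear FF -> ('F_p)^o} :=
  HB.pack (psi : FF -> ('F_p)^o) (GRing.isLinear.Build _ _ _ _ _ psi_lin).

Let Phi (z : FF) : {ffun 'I_s * 'I_t -> 'F_p} :=
  [ffun x => if x \in S then psiL (z * A x) else 0].

Let value_pattern_Aelt ab :
  @value_pattern p F chF s t (alpha ^+ t) (alpha ^+ s) psi S ab = Phi (A ab).
Proof.
apply/ffunP => x; rewrite !ffunE /Barr Aelt_Tsh ?prim_exprt_s ?prim_exprs_t //.
by rewrite mulrC.
Qed.

Let Phi0 : Phi 0 = 0.
Proof. by apply/ffunP => x; rewrite !ffunE mul0r linear0 if_same. Qed.

Let Phi_inj : injective Phi.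
Proof.
move=> z1 z2 eq_Phi; apply/eqP; rewrite -subr_eq0; apply/eqP.
apply: (@linear_mul_basis_eq0 _ _ psiL _ _ basisS psi_nz) => y /mapP[x].
rewrite mem_enum => xS ->.
have /ffunP/(_ x) := eq_Phi; rewrite !ffunE xS => eq_x.
by rewrite mulrBl linearB eq_x subrr.
Qed.

Let Phi_onto w : w \in pffun_on 0 S predT -> exists z, Phi z = w.
Proof.
have sub_on : [set Phi z | z in setT] \subset pffun_on 0 S predT.
  apply/subsetP => _ /imsetP[z _ ->]; apply/pffun_onP; split=> //.
  by apply/subsetP => x; rewrite inE ffunE; case: (x \in S).
have [_] := subset_leqif_card sub_on.
have card_Fp_predT : #|(predT : {pred 'F_p})| = p.
  by apply: etrans (card_Fp (pcharf_prime chF)); apply: eq_card.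
rewrite card_imset; last exact: Phi_inj.
rewrite cardsT card_pffun_on card_pprimeChar -pprimeChar_dimf.
rewrite (card_basis_pattern basisS) card_Fp_predT eqxx => /esym/subsetP sub_im w_on.
by have /imsetP[z _ ->] := sub_im w w_on; exists z.
Qed.

Lemma basis_pattern_sampling :
  sampling_pattern (chF := chF) (alpha ^+ t) (alpha ^+ s) psi S.
Proof.
split=> [ab ab' | w].
  by rewrite !value_pattern_Aelt => /Phi_inj/Aelt_inj.
split=> [[nz_w w_S] | [ab <-]].
  have [z def_w] : exists z, Phi z = w.
    apply/Phi_onto/pffun_onP; split=> //; apply/subsetP => x; rewrite inE.
    by apply: contraR => /w_S ->.
  have nz_z : z != 0 by apply: contraNneq nz_w => z0; rewrite -def_w z0 Phi0.
  have [ab def_z] := Aelt_onto nz_z.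
  by exists ab; rewrite value_pattern_Aelt def_z.
split=> [|x /negbTE xS]; last by rewrite ffunE xS.
by rewrite value_pattern_Aelt -Phi0 (inj_eq Phi_inj) A_neq0.
Qed.

End Sampling.

End PrimitiveRoot.

Theorem mainTheorem4 (p n s t : nat) (F : finFieldType) (chF : p \in [pchar F])
  (hp : prime p) (hn : (1 <= n)%N) (hcard : #|F| = (p ^ n)%N)
  (hst : (p ^ n - 1)%N = (s * t)%N) (hs : (0 < s)%N) (hlt : (s < t)%N)
  (hcop : coprime s t)
  (alpha : F) (halpha : (p ^ n - 1)%N.-primitive_root alpha)
  (S0 : {set 'I_s * 'I_t}) (m : nat) (hm : #|S0| = m) (hmn : (m %| n)%N)
  (hS0 : lin_indep_pattern chF (alpha ^+ t) (alpha ^+ s) S0) :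
  exists sh : 'I_(n %/ m) -> 'I_s * 'I_t,
    (forall k l : 'I_(n %/ m), k != l ->
        [disjoint translate (sh k) S0 & translate (sh l) S0]) /\
    let S := \bigcup_(k < n %/ m) translate (sh k) S0 in
    basis_pattern chF (alpha ^+ t) (alpha ^+ s) S /\
    (forall psi : pPrimeCharType chF -> 'F_p,
        (forall (c : 'F_p) (x y : pPrimeCharType chF),
            psi (c *: x + y) = c * psi x + psi y) ->
        (exists x, psi x != 0) ->
        sampling_pattern (chF := chF) (alpha ^+ t) (alpha ^+ s) psi S).
Proof.
have S0_gt0 : (0 < #|S0|)%N.
  by rewrite hm lt0n; apply: contraTneq hmn => ->; rewrite dvd0n -lt0n.
have rm_n : (n %/ m * #|S0|)%N = n by rewrite hm divnK.
have [sh span_full] :=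
  exists_translates_span_full hcard hst hcop halpha hS0 S0_gt0 rm_n.
have [||basisS cardS] := @basis_pattern_bigcup _ _ chF _ _ (alpha ^+ t) (alpha ^+ s)
    _ (fun k => translate (sh k) S0).
- under eq_bigr do rewrite card_translate.
  by rewrite sum_nat_const card_ord rm_n (dim_pPrimeChar chF hcard).
- by rewrite span_full.
exists sh; split; first exact: card_bigcup_disjoint cardS.
split=> // psi psi_lin psi_nz.
exact: (basis_pattern_sampling (psi := psi) hcard hst hcop halpha basisS
  psi_lin psi_nz).
Qed.
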